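(* Let $A=(a_{ij})\in\mathcal{B}^{m,n}$ and let $k$ be a field. Let $k[A]=k[x_{ij} : a_{ij}=1]$ and let $A[x]$ be the $m\times n$ matrix over $k[A]$ with $A[x]_{ij}=x_{ij}$ if $a_{ij}=1$ and $0$ otherwise. For $t\geq 1$ let $I_t(A[x])\subseteq k[A]$ be the ideal generated by all $t\times t$ minors of $A[x]$. If for some integer $s\geq 2$ the monomial $x_{i_1j_1}\cdots x_{i_sj_s}$ (a product of variables of $k[A]$) lies in $I_s(A[x])$, then $\{a_{i_kj_k} : 1\leq k\leq s\}$ is an isolated set of $A$.
   Context: $\mathcal{B}^{m,n}$ denotes $m\times n$ matrices with entries in the Boolean semiring $\{0,1\}$ with $\vee$ (or), $\wedge$ (and). A pair of entries $\{a_{ij},a_{k\ell}\}$ is isolated if $a_{ij}=a_{k\ell}=1$ and $a_{i\ell}\wedge a_{kj}=0$. A subset $T$ of the entries of $A$ equal to $1$ is an isolated set if it has size one or every pair of its elements is isolated. *)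

From HB Require Import structures.
From mathcomp Require Import all_boot all_order all_algebra.
From mathcomp Require Import mpoly.
Set Implicit Arguments. Unset Strict Implicit. Unset Printing Implicit Defensive.
Import GRing.Theory.
Local Open Scope ring_scope.

Definition isolated_pair m n (A : 'M[bool]_(m, n)) (p q : 'I_m * 'I_n) : bool :=
  [&& A p.1 p.2, A q.1 q.2 & ~~ (A p.1 q.2 && A q.1 p.2)].

Definition isolated_set m n (A : 'M[bool]_(m, n)) (T : {set 'I_m * 'I_n}) : Prop :=
  (forall p, p \in T -> A p.1 p.2) /\
  (#|T| = 1%N \/
   forall p q, p \in T -> q \in T -> p != q -> isolated_pair A p q).

(* The positions where a_ij = 1: these index the variables of k[A]. *)
Definition supp m n (A : 'M[bool]_(m, n)) := {p : 'I_m * 'I_n | A p.1 p.2}.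

Definition kA (k : fieldType) m n (A : 'M[bool]_(m, n)) :=
  {mpoly k[#|{: supp A}|]}.

Definition xvar (k : fieldType) m n (A : 'M[bool]_(m, n)) (p : supp A) : kA k A :=
  'X_(enum_rank p).

Definition Ax (k : fieldType) m n (A : 'M[bool]_(m, n)) : 'M[kA k A]_(m, n) :=
  \matrix_(i, j)
    match @insub _ (fun p : 'I_m * 'I_n => A p.1 p.2) (supp A) (i, j) with
    | Some p => xvar k p
    | None => 0
    end.

Definition minor (R : comNzRingType) m n t (M : 'M[R]_(m, n))
  (r : {ffun 'I_t -> 'I_m}) (c : {ffun 'I_t -> 'I_n}) : R :=
  \det (\matrix_(i, j) M (r i) (c j)).

(* f lies in I_t(M), the ideal generated by all t x t minors of M
   (minors taken over injective row/column selections; these are, up to sign,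
   exactly the minors with increasing row and column indices). *)
Definition in_minor_ideal (R : comNzRingType) m n t (M : 'M[R]_(m, n)) (f : R) : Prop :=
  exists cf : {ffun 'I_t -> 'I_m} * {ffun 'I_t -> 'I_n} -> R,
    f = \sum_(rc : {ffun 'I_t -> 'I_m} * {ffun 'I_t -> 'I_n} | injectiveb rc.1 && injectiveb rc.2) cf rc * minor M rc.1 rc.2.

(* Evaluating k[A] at the 0/1 point given by the indicator 1_S of a set S of
   positions with {e_l} ⊆ S ⊆ supp A sends the monomial to 1 and I_s(A[x])
   into the ideal of s-minors of the 0/1 matrix 1_S, so for no such S can all
   s-minors of 1_S vanish.  With S = {e_l} this forces the e_l into distinct
   rows, since otherwise 1_S has fewer than s nonzero rows.  If moreover
   a_{i1 j2} = a_{i2 j1} = 1 for two of them, add (i1, j2) and (i2, j1) to S: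
   then 1_S is a sum of s - 1 rank-one matrices, the 2x2 block counting as
   one, so its s-minors vanish. *)

From HB Require Import structures.
From mathcomp Require Import all_boot all_order all_algebra.
From mathcomp Require Import mpoly.
Set Implicit Arguments. Unset Strict Implicit. Unset Printing Implicit Defensive.
Import GRing.Theory.
Local Open Scope ring_scope.

Section Minors.
Variable R : comNzRingType.

Definition minors_vanish m n t (M : 'M[R]_(m, n)) : Prop :=
  forall (r : {ffun 'I_t -> 'I_m}) (c : {ffun 'I_t -> 'I_n}),
    injective r -> injective c -> minor M r c = 0.

Lemma det_row_eq0 t (M : 'M[R]_t) i0 : (forall j, M i0 j = 0) -> \det M = 0.
Proof. by move=> M0; rewrite (expand_det_row M i0) big1 // => j _; rewrite M0 mul0r. Qed.

Lemma det_col_eq0 t (M : 'M[R]_t) j0 : (forall i, M i j0 = 0) -> \det M = 0.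
Proof. by move=> M0; rewrite -det_tr (@det_row_eq0 _ _ j0) // => i; rewrite mxE. Qed.

Lemma minor_mulmx m n t (U : 'M[R]_(m, t)) (W : 'M[R]_(t, n)) r c :
  minor (U *m W) r c = \det (rowsub r U) * \det (colsub c W).
Proof. by rewrite -det_mulmx -mxsub_mul. Qed.

Lemma minors_vanish_mulmx_col0 m n t (U : 'M[R]_(m, t)) (W : 'M[R]_(t, n)) l0 :
  (forall i, U i l0 = 0) -> minors_vanish t (U *m W).
Proof.
move=> U0 r c _ _; rewrite minor_mulmx (@det_col_eq0 _ _ l0) ?mul0r // => i.
by rewrite mxE U0.
Qed.

Lemma minors_vanish_few_rows m n t (M : 'M[R]_(m, n)) (X : {set 'I_m}) :
  (#|X| < t)%N -> (forall i j, i \notin X -> M i j = 0) -> minors_vanish t M.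
Proof.
move=> ltXt M0 r c r_inj _.
have [i0 ri0X | rX] := pickP (fun i => r i \notin X).
  by apply: (@det_row_eq0 _ _ i0) => j; rewrite mxE M0.
suff: (t <= #|X|)%N by rewrite leqNgt ltXt.
rewrite -[t]card_ord -(card_imset _ r_inj); apply/subset_leq_card/subsetP.
by move=> _ /imsetP [i _ ->]; move/negbFE: (rX i).
Qed.

Lemma in_minor_ideal_eq0 m n t (M : 'M[R]_(m, n)) x :
  minors_vanish t M -> in_minor_ideal t M x -> x = 0.
Proof.
move=> M0 [cf ->]; rewrite big1 // => rc /andP [/injectiveP r_inj /injectiveP c_inj].
by rewrite M0 ?mulr0.
Qed.

End Minors.

Lemma in_minor_ideal_map (R S : comNzRingType) (f : {rmorphism R -> S})
    m n t (M : 'M[R]_(m, n)) x :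
  in_minor_ideal t M x -> in_minor_ideal t (map_mx f M) (f x).
Proof.
case=> cf ->; exists (f \o cf); rewrite rmorph_sum; apply: eq_bigr => rc _.
rewrite rmorphM /minor -det_map_mx; congr (_ * \det _).
by apply/matrixP => i j; rewrite !mxE.
Qed.

Definition indicator_mx (R : comNzRingType) m n (S : {set 'I_m * 'I_n}) : 'M[R]_(m, n) :=
  \matrix_(i, j) ((i, j) \in S)%:R.

Section MergedPositions.
Variables (R : comNzRingType) (m n t : nat) (e : 'I_t -> 'I_m * 'I_n) (g : 'I_t -> 'I_t).

(* The union over l of the rectangles rows(g^-1 l) x cols(g^-1 l).  When the
   rows of [e] are distinct its indicator is the sum of the indicators of
   these rectangles, i.e. the product below with inner dimension t. *)
Definition merged_positions : {set 'I_m * 'I_n} :=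
  [set p | [exists a, exists b, (g a == g b) && (p == ((e a).1, (e b).2))]].

Hypothesis rows_inj : injective (fun a => (e a).1).

Lemma indicator_merged_mulmx :
  indicator_mx R merged_positions =
  \matrix_(i, l) ([exists a, ((e a).1 == i) && (g a == l)])%:R *m
  \matrix_(l, j) ([exists b, (g b == l) && ((e b).2 == j)])%:R.
Proof.
apply/matrixP => i j; rewrite !mxE inE.
have [a /eqP <- {i} | no_row] := pickP (fun a => (e a).1 == i); last first.
  rewrite big1 => [|l _]; last first.
    rewrite !mxE; case: existsP => [[a /andP [ea _]] | _]; last by rewrite mul0r.
    by rewrite no_row in ea.
  case: existsP => // -[a' /existsP [b /andP [_ /eqP [ea' _]]]].
  by move: (no_row a'); rewrite -ea' eqxx.
have row_a a' : ((e a).1 == (e a').1) = (a' == a).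
  by apply/eqP/eqP => [/esym/rows_inj | ->].
rewrite (bigD1 (g a)) //= big1 ?addr0 => [|l gal]; rewrite !mxE.
  have -> : [exists a0, ((e a0).1 == (e a).1) && (g a0 == g a)].
    by apply/existsP; exists a; rewrite !eqxx.
  rewrite mul1r; congr ((nat_of_bool _)%:R); apply/idP/idP.
    case/existsP => a' /existsP [b /andP [gab /eqP [ea' eb]]].
    move/eqP: ea'; rewrite row_a => /eqP a'a; rewrite a'a in gab.
    by apply/existsP; exists b; rewrite eb (eqP gab) !eqxx.
  case/existsP => b /andP [gb /eqP eb].
  by apply/existsP; exists a; apply/existsP; exists b; rewrite eq_sym gb -eb eqxx.
case: existsP => [[a' /andP [ea' ga']] | _]; last by rewrite mul0r.
move: ea'; rewrite eq_sym row_a => /eqP a'a.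
by rewrite a'a in ga'; rewrite (eqP ga') eqxx in gal.
Qed.

Lemma minors_vanish_merged l0 :
  (forall a, g a != l0) -> minors_vanish t (indicator_mx R merged_positions).
Proof.
move=> gNl0; rewrite indicator_merged_mulmx.
apply: (@minors_vanish_mulmx_col0 _ _ _ _ _ _ l0) => i; rewrite mxE.
by case: existsP => // -[a /andP [_ /eqP gal0]]; case/eqP: (gNl0 a).
Qed.

End MergedPositions.

Section Evaluation.
Variables (k : fieldType) (m n : nat) (A : 'M[bool]_(m, n)).

Definition indicator_point (S : {set 'I_m * 'I_n}) (i : 'I_#|{: supp A}|) : k :=
  (val (enum_val i) \in S)%:R.

Lemma meval_Ax_indicator (S : {set 'I_m * 'I_n}) i j :
  {in S, forall p, A p.1 p.2} ->
  meval (indicator_point S) (Ax k A i j) = ((i, j) \in S)%:R.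
Proof.
move=> SA; rewrite mxE; case: insubP => [p _ <- | Aij].
  by rewrite mevalXU /indicator_point enum_rankK.
by rewrite meval0; case: (boolP ((i, j) \in S)) => // /SA; rewrite (negbTE Aij).
Qed.

Lemma map_Ax_indicator (S : {set 'I_m * 'I_n}) :
  {in S, forall p, A p.1 p.2} ->
  map_mx (meval (indicator_point S)) (Ax k A) = indicator_mx k S.
Proof. by move=> SA; apply/matrixP => i j; rewrite mxE meval_Ax_indicator // mxE. Qed.

Variables (s : nat) (e : 'I_s -> 'I_m * 'I_n).
Hypothesis minor_ideal_monomial :
  in_minor_ideal s (Ax k A) (\prod_(l < s) Ax k A (e l).1 (e l).2).

Lemma indicator_minors_nonvanishing (S : {set 'I_m * 'I_n}) :
  {in S, forall p, A p.1 p.2} -> (forall l, e l \in S) ->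
  ~ minors_vanish s (indicator_mx k S).
Proof.
move=> SA eS vanish; move: minor_ideal_monomial.
move=> /(in_minor_ideal_map (meval (indicator_point S))).
rewrite map_Ax_indicator // => /(in_minor_ideal_eq0 vanish) /eqP.
rewrite rmorph_prod /= big1 ?oner_eq0 // => l _.
by rewrite meval_Ax_indicator // -surjective_pairing eS.
Qed.

Hypothesis eA : forall l, A (e l).1 (e l).2.

Lemma minor_ideal_monomial_rows_inj : injective (fun l => (e l).1).
Proof.
move=> l1 l2 e12; apply/eqP/negPn/negP => l12.
pose X := [set (e l).1 | l in 'I_s].
apply: (@indicator_minors_nonvanishing [set e l | l in 'I_s]).
- by move=> _ /imsetP [l _ ->].
- by move=> l; apply: imset_f.
apply: (@minors_vanish_few_rows _ _ _ _ _ X) => [|i j iNX]; last first.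
  rewrite mxE; case: imsetP => [[l _ /(congr1 fst) /= il] | //].
  by rewrite il (imset_f (fun l => (e l).1)) in iNX.
rewrite -[s in (_ < s)%N]card_ord ltn_neqAle leq_imset_card andbT.
by apply: contra l12 => /imset_injP inj; apply/eqP; apply: inj.
Qed.

Lemma minor_ideal_monomial_isolated l1 l2 :
  l1 != l2 -> ~~ (A (e l1).1 (e l2).2 && A (e l2).1 (e l1).2).
Proof.
move=> l12; apply/negP => /andP [A12 A21].
pose g l := if l == l2 then l1 else l.
have gNl2 a : g a != l2 by rewrite /g; case: (eqVneq a l2).
have g_eq a b : g a = g b -> [\/ a = b, (a, b) = (l1, l2) | (a, b) = (l2, l1)].
  rewrite /g; case: (eqVneq a l2) => [-> | _]; case: (eqVneq b l2) => [-> | _] ab;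
    by subst; constructor.
apply: (@indicator_minors_nonvanishing (merged_positions e g)).
- move=> p; rewrite inE => /existsP [a /existsP [b /andP [/eqP gab /eqP ->]]] /=.
  by case: (g_eq a b gab) => [-> | [-> ->] | [-> ->]]; rewrite ?eA.
- by move=> l; rewrite inE; apply/existsP; exists l; apply/existsP; exists l;
    rewrite -surjective_pairing !eqxx.
exact: (minors_vanish_merged k minor_ideal_monomial_rows_inj gNl2).
Qed.

End Evaluation.

Theorem theorem4p13 (k : fieldType) (m n : nat) (A : 'M[bool]_(m, n))
  (s : nat) (hs : (2 <= s)%N) (e : 'I_s -> 'I_m * 'I_n)
  (he : forall l, A (e l).1 (e l).2)
  (hmem : in_minor_ideal s (Ax k A) (\prod_(l < s) Ax k A (e l).1 (e l).2)) :
  isolated_set A [set e l | l : 'I_s].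
Proof.
split; first by move=> _ /imsetP [l _ ->].
right=> _ _ /imsetP [l1 _ ->] /imsetP [l2 _ ->] e12.
have l12 : l1 != l2 by apply: contraNneq e12 => ->.
by rewrite /isolated_pair !he (minor_ideal_monomial_isolated hmem he l12).
Qed.
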